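(* Let $X$ be a topological space and let $G\subset \mathrm{Hom}(X)$ be a group of homeomorphisms of $X$ (acting effectively) such that the topology of pointwise convergence $\tau_p$ is an admissible group topology on $G$; $G$ carries $\tau_p$. Let $\mathcal U_X$ be an equiuniformity on $X$ for the action of $G$. Let $\mathcal U$ be the uniformity on $G$ whose base consists of the coverings $$\{U_{x_1,\dots,x_n;g;\mathrm U}\mid g\in G\},\qquad U_{x_1,\dots,x_n;g;\mathrm U}=\{h\in G\mid (g(x_k),h(x_k))\in \mathrm U,\ k=1,\dots,n\},$$ where $x_1,\dots,x_n\in X$, $n\in\mathbb N$, and $\mathrm U$ is an entourage of $\mathcal U_X$. Let $R_{\mathcal K}$ be the uniformity on $G$ whose base consists of the coverings $\{Og\,\mathrm{St}_{x_1,\dots,x_n}\mid g\in G\}$, where $O$ is a neighbourhood of the identity of $G$ and $x_1,\dots,x_n\in X$, $n\in\mathbb N$. For $x_1,\dots,x_n\in X$ and an entourage $\mathrm U\in\mathcal U_X$ put $O_{x_1,\dots,x_n;\mathrm U}=\{h\in G\mid (x_k,h(x_k))\in\mathrm U,\ (x_k,h^{-1}(x_k))\in\mathrm U,\ k=1,\dots,n\}$. Then: (1) $\mathcal U\subset R_{\mathcal K}$. (2) Suppose that for any points $x_1,\dots,x_n\in X$, $n\in\mathbb N$, and any entourage $\mathrm U\in\mathcal U_X$ there is an entourage $\mathrm V\in\mathcal U_X$ such that: whenever $g,h\in G$ satisfy $(g(x_k),h(x_k))\in\mathrm V$ for $k=1,\dots,n$, there exists $g'\in g\,\mathrm{St}_{x_1,\dots,x_n}$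 with $h\in O_{x_1,\dots,x_n;\mathrm U}\,g'$. Then $\mathcal U=R_{\mathcal K}$.
   Context: The topology of pointwise convergence $\tau_p$ on $G$ has subbase the sets $[x,O]=\{f\in G\mid f(x)\in O\}$, $x\in X$, $O$ open in $X$. A group topology on $G$ is admissible if $G$ is a topological group in it and the action $G\times X\to X$ is continuous. $\mathrm{St}_{x_1,\dots,x_n}=\{g\in G\mid g(x_i)=x_i,\ i=1,\dots,n\}$. A uniformity $\mathcal U_X$ on $X$ (compatible with its topology) is an equiuniformity if every $g\in G$ is uniformly continuous and for every uniform covering $u$ there are a neighbourhood $O$ of the identity of $G$ and a uniform covering $v$ such that $\{OV\mid V\in v\}$ refines $u$. The uniformity $\mathcal U$ is the restriction to $G$, embedded in $X^X$ via $g\mapsto (g(x))_{x\in X}$, of the product uniformity of copies of $\mathcal U_X$. *)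

From HB Require Import structures.
From mathcomp Require Import all_boot all_order.
From mathcomp Require Import all_classical topology.
Set Implicit Arguments. Unset Strict Implicit. Unset Printing Implicit Defensive.
Local Open Scope classical_set_scope.

(* Effectiveness (act injective) makes G
   a group of bijections of X, identified with a subgroup of Hom(X). *)
Definition group_action (G X : Type) (mul : G -> G -> G) (inv : G -> G)
  (one : G) (act : G -> X -> X) : Prop :=
  [/\ (forall a b c, mul a (mul b c) = mul (mul a b) c),
      (forall a, mul one a = a),
      (forall a, mul (inv a) a = one),
      (forall x, act one x = x) &
      (forall g h x, act (mul g h) x = act g (act h x))].

Definition effective (G X : Type) (act : G -> X -> X) : Prop :=
  forall g h, act g = act h -> g = h.

Definition acts_by_homeomorphisms (G : Type) (X : topologicalType)
  (act : G -> X -> X) : Prop :=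
  forall g, continuous (act g) /\
    exists g' : X -> X, continuous g' /\ cancel (act g) g' /\ cancel g' (act g).

Definition pnbhs (G : Type) (X : topologicalType) (act : G -> X -> X)
  (g : G) (A : set G) : Prop :=
  exists n (xs : 'I_n -> X) (Os : 'I_n -> set X),
    (forall i, open (Os i) /\ Os i (act g (xs i))) /\
    [set h | forall i, Os i (act h (xs i))] `<=` A.

Definition tau_p_admissible (G : Type) (X : topologicalType)
  (mul : G -> G -> G) (inv : G -> G) (act : G -> X -> X) : Prop :=
  [/\ (forall g h W, pnbhs act (mul g h) W ->
         exists A B, [/\ pnbhs act g A, pnbhs act h B &
           forall a b, A a -> B b -> W (mul a b)]),
      (forall g W, pnbhs act (inv g) W ->
         exists A, pnbhs act g A /\ forall a, A a -> W (inv a)) &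
      (forall g x W, nbhs (act g x) W ->
         exists A N, [/\ pnbhs act g A, nbhs x N &
           forall a y, A a -> N y -> W (act a y)])].

Definition refines (T : Type) (u v : set (set T)) : Prop :=
  forall A, u A -> exists B, v B /\ A `<=` B.

Definition unif_of_base (T : Type) (base : set (set (set T))) : set (set (set T)) :=
  [set u | exists b, base b /\ refines b u].

Definition ball_of (X : Type) (E : set (X * X)) (x : X) : set X :=
  [set y | E (x, y)].

Definition equiuniformity (G : Type) (X : uniformType) (one : G)
  (act : G -> X -> X) : Prop :=
  (forall g (E : set (X * X)), entourage E ->
     exists V, entourage V /\ forall x y, V (x, y) -> E (act g x, act g y)) /\
  (forall E : set (X * X), entourage E ->
     exists O V, [/\ pnbhs act one O, entourage V &
       refines [set [set act o z | o in O & z in ball_of V x] | x in [set: X]]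
               [set ball_of E y | y in [set: X]]]).

Definition St (G X : Type) (act : G -> X -> X) n (xs : 'I_n -> X) : set G :=
  [set g | forall k, act g (xs k) = xs k].

Definition Uset (G X : Type) (act : G -> X -> X) n (xs : 'I_n -> X) (g : G)
  (E : set (X * X)) : set G :=
  [set h | forall k, E (act g (xs k), act h (xs k))].

Definition Oset (G X : Type) (inv : G -> G) (act : G -> X -> X) n
  (xs : 'I_n -> X) (E : set (X * X)) : set G :=
  [set h | forall k, E (xs k, act h (xs k)) /\ E (xs k, act (inv h) (xs k))].

Definition OgSt (G X : Type) (mul : G -> G -> G) (act : G -> X -> X)
  (O : set G) (g : G) n (xs : 'I_n -> X) : set G :=
  [set mul (mul o g) s | o in O & s in St act xs].

Definition U_base (G : Type) (X : uniformType) (act : G -> X -> X)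
  : set (set (set G)) :=
  [set u | exists n (xs : 'I_n -> X) (E : set (X * X)),
     entourage E /\ u = [set Uset act xs g E | g in [set: G]]].

Definition RK_base (G : Type) (X : topologicalType) (mul : G -> G -> G)
  (one : G) (act : G -> X -> X) : set (set (set G)) :=
  [set u | exists n (xs : 'I_n -> X) (O : set G),
     pnbhs act one O /\ u = [set OgSt mul act O g xs | g in [set: G]]].

(* (1): by equiuniformity, for a small enough neighbourhood O of the identity
   every o in O moves every point of X within a given entourage E; since
   elements of St_{x_1..x_n} fix the x_k, the whole set O g St_{x_1..x_n} lies
   in U_{x_1..x_n;g;E}.
   (2): a tau_p-neighbourhood O of the identity contains the elements moving
   finitely many points y_1..y_m within an entourage E.  Applying the
   hypothesis to the points x_1..x_n,y_1..y_m turns every h that is V-close to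
   g at these points into o g s with s in St_{x_1..x_n} and o in
   O_{x,y;E} ⊆ O, so U_{x,y;g;V} lies in O g St_{x_1..x_n}. *)

From mathcomp Require Import all_boot all_order.
From mathcomp Require Import all_classical topology.
Set Implicit Arguments. Unset Strict Implicit. Unset Printing Implicit Defensive.
Local Open Scope classical_set_scope.

Lemma refines_trans (T : Type) (a b c : set (set T)) :
  refines a b -> refines b c -> refines a c.
Proof.
move=> hab hbc A /hab [B [/hbc [C [hC hBC]] hAB]].
by exists C; split => //; apply: subset_trans hBC.
Qed.

Lemma unif_of_base_subset (T : Type) (base base' : set (set (set T))) :
  (forall b, base b -> exists b', base' b' /\ refines b' b) ->
  unif_of_base base `<=` unif_of_base base'.
Proof.
move=> hbase u [b [/hbase [b' [hb' hb'b]] hbu]].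
by exists b'; split => //; apply: refines_trans hbu.
Qed.

Definition fcat (T : Type) n m (xs : 'I_n -> T) (ys : 'I_m -> T)
    : 'I_(n + m) -> T :=
  fun i => match fintype.split i with inl a => xs a | inr b => ys b end.

Lemma fcat_lshift (T : Type) n m (xs : 'I_n -> T) (ys : 'I_m -> T) a :
  fcat xs ys (lshift m a) = xs a.
Proof. by rewrite /fcat -[lshift m a]/(unsplit (inl a)) unsplitK. Qed.

Lemma fcat_rshift (T : Type) n m (xs : 'I_n -> T) (ys : 'I_m -> T) b :
  fcat xs ys (rshift n b) = ys b.
Proof. by rewrite /fcat -[rshift n b]/(unsplit (inr b)) unsplitK. Qed.

Lemma open_entourage (X : uniformType) (x : X) (O : set X) :
  open O -> O x -> exists2 E, entourage E & forall y, E (x, y) -> O y.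
Proof.
move=> oO Ox; have /nbhsP [E hE EO] : nbhs x O by apply: open_nbhs_nbhs.
by exists E => // y Exy; apply: EO; rewrite /xsection /= inE.
Qed.

Section PointwiseNeighbourhoods.
Variables (G : Type) (X : uniformType) (act : G -> X -> X).

Lemma pnbhs_refl g (A : set G) : pnbhs act g A -> A g.
Proof. by move=> [n [xs [Os [hOs sub]]]]; apply: sub => i; case: (hOs i). Qed.

Lemma pnbhs_Uset g (A : set G) : pnbhs act g A ->
  exists m (ys : 'I_m -> X) (E : set (X * X)),
    entourage E /\ Uset act ys g E `<=` A.
Proof.
move=> [m [ys [Os [hOs sub]]]].
have /choice [Es hEs] : forall i, exists E : set (X * X), entourage E /\
    forall y, E (act g (ys i), y) -> Os i y.
  move=> i; have [oO Ogy] := hOs i.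
  by have [E hE EO] := open_entourage oO Ogy; exists E.
exists m, ys, [set p | forall i, Es i p]; split.
  by apply: filter_forall => i; case: (hEs i).
by move=> h hU; apply: sub => i; apply: (proj2 (hEs i)); apply: hU.
Qed.

End PointwiseNeighbourhoods.

Section UniformitiesOnG.
Variables (X : uniformType) (G : Type).
Variables (mul : G -> G -> G) (inv : G -> G) (one : G) (act : G -> X -> X).
Hypothesis mulA : forall a b c, mul a (mul b c) = mul (mul a b) c.
Hypothesis act1 : forall x, act one x = x.
Hypothesis actM : forall g h x, act (mul g h) x = act g (act h x).

Lemma equiuniformity_small_moves (E : set (X * X)) :
  equiuniformity one act -> entourage E ->
  exists O, pnbhs act one O /\ forall o z, O o -> E (z, act o z).
Proof.
move=> [_ equi] hE.
pose E1 := split_ent E.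
have hE1 : entourage E1 by apply: entourage_split_ent.
have [O [V [hO hV href]]] :=
  equi (E1 `&` E1^-1)%relation (filterI hE1 (entourage_inv hE1)).
exists O; split => // o z Oo.
have [_ [[y _ <-] sub]] :=
  href [set act o' w | o' in O & w in ball_of V z] (ex_intro2 _ _ z I erefl).
have [_ E1zy] : (E1 `&` E1^-1)%relation (y, z).
  apply: sub; exists one; first exact: pnbhs_refl hO.
  by exists z; [exact: entourage_refl | rewrite act1].
have [E1yoz _] : (E1 `&` E1^-1)%relation (y, act o z).
  by apply: sub; exists o => //; exists z => //; exact: entourage_refl.
exact: entourage_split E1zy E1yoz.
Qed.

Lemma U_base_refined_by_RK_base : equiuniformity one act ->
  forall b, U_base act b -> exists b', RK_base mul one act b' /\ refines b' b.
Proof.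
move=> hequi _ [n [xs [E [hE ->]]]].
have [O [hO small]] := equiuniformity_small_moves hequi hE.
exists [set OgSt mul act O g xs | g in [set: G]]; split.
  by exists n, xs, O.
move=> _ [g _ <-]; exists (Uset act xs g E); split; first by exists g.
by move=> _ [o Oo [s Ss <-]] k; rewrite !actM Ss; apply: small.
Qed.

Definition St_factorization : Prop :=
  forall n (xs : 'I_n -> X) (E : set (X * X)), entourage E ->
    exists V : set (X * X), entourage V /\
      forall g h : G, (forall k, V (act g (xs k), act h (xs k))) ->
        exists g', (exists s, St act xs s /\ g' = mul g s) /\
          exists o, Oset inv act xs E o /\ h = mul o g'.

Lemma RK_base_refined_by_U_base : St_factorization ->
  forall b, RK_base mul one act b -> exists b', U_base act b' /\ refines b' b.
Proof.
move=> hfact _ [n [xs [O [hO ->]]]].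
have [m [ys [E [hE EO]]]] := pnbhs_Uset hO.
have [V [hV hVfact]] := hfact _ (fcat xs ys) E hE.
exists [set Uset act (fcat xs ys) g V | g in [set: G]]; split.
  by exists (n + m), (fcat xs ys), V.
move=> _ [g _ <-]; exists (OgSt mul act O g xs); split; first by exists g.
move=> h /hVfact [_ [[s [Ss ->]] [o [Oo ->]]]].
exists o.
  apply: EO => i; rewrite act1.
  by have [+ _] := Oo (rshift n i); rewrite fcat_rshift.
by exists s; [move=> k; rewrite -(fcat_lshift xs ys); apply: Ss | rewrite mulA].
Qed.

End UniformitiesOnG.

Theorem theorem2p1 (X : uniformType) (G : Type)
  (mul : G -> G -> G) (inv : G -> G) (one : G) (act : G -> X -> X) :
  group_action mul inv one act ->
  effective act ->
  acts_by_homeomorphisms act ->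
  tau_p_admissible mul inv act ->
  equiuniformity one act ->
  (* (1) *)
  unif_of_base (U_base act) `<=` unif_of_base (RK_base mul one act) /\
  (* (2) *)
  ((forall n (xs : 'I_n -> X) (E : set (X * X)), entourage E ->
      exists V : set (X * X), entourage V /\
        forall g h : G, (forall k, V (act g (xs k), act h (xs k))) ->
          exists g', (exists s, St act xs s /\ g' = mul g s) /\
            exists o, Oset inv act xs E o /\ h = mul o g') ->
   unif_of_base (U_base act) = unif_of_base (RK_base mul one act)).
Proof.
move=> [mulA _ _ act1 actM] _ _ _ hequi.
have U_sub_RK := unif_of_base_subset (U_base_refined_by_RK_base act1 actM hequi).
split=> // hfact; apply/seteqP; split=> //.
exact/unif_of_base_subset/(RK_base_refined_by_U_base mulA act1 hfact).
Qed.
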